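(* Let $b,c\in Z^{10}$ with $\sum_i b_i=\sum_i c_i=0$, and assume $t\nmid B_i$, $t\nmid C_i$, $t\nmid B_i+B_{i+2}$ and $t\nmid C_i+C_{i+2}$ for all odd $i$ (indices mod $10$). Then $\mathbb{M}(b)\cong\mathbb{M}(c)$ as $B_{5,10}$-modules if and only if both $$t\mid C_1B_3(C_5+C_7)B_9-B_1C_3(B_5+B_7)C_9\quad\text{and}\quad t\mid C_1B_3C_5(B_7+B_9)-B_1C_3B_5(C_7+C_9).$$
   Context: Let $Z=\mathbb{C}[[t]]$. Let $\Gamma_{10}$ be the quiver with vertices $0,1,\dots,9$ (indices taken mod $10$) on a cycle and arrows $x_i\colon i-1\to i$, $y_i\colon i\to i-1$ for $i=1,\dots,10$. Let $B_{5,10}$ be the completed path algebra of $\Gamma_{10}$ modulo the closed ideal generated by $xy=yx$ and $x^5=y^5$ at every vertex. For $b=(b_1,\dots,b_{10})\in Z^{10}$ with $\sum_i b_i=0$, the $B_{5,10}$-module $\mathbb{M}(b)$ has $V_i=Z\oplus Z$ at every vertex, and for odd $j$: $x_j=\begin{pmatrix} t& b_j\\ 0&1\end{pmatrix}$, $y_j=\begin{pmatrix} 1&-b_j\\0&t\end{pmatrix}$; for even $j$: $x_j=\begin{pmatrix}1&b_j\\0&t\end{pmatrix}$, $y_j=\begin{pmatrix}t&-b_j\\0&1\end{pmatrix}$. An isomorphism $\mathbb{M}(b)\to\mathbb{M}(c)$ is a family of invertible $Z$-linear maps $\varphi_i\colon Z^2\to Z^2$ commuting with all $x_i$ and $y_i$.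 For odd $i$ write $B_i=b_i+b_{i+1}$ and $C_i=c_i+c_{i+1}$ (indices mod $10$). *)

From HB Require Import structures.
From mathcomp Require Import all_boot all_order all_algebra.
From mathcomp Require Import Rstruct complex.
Set Implicit Arguments. Unset Strict Implicit. Unset Printing Implicit Defensive.
Import Order.TTheory GRing.Theory Num.Theory.
Local Open Scope ring_scope.

Definition CC : fieldType := (Rdefinitions.R)[i].

(* Z = C[[t]]: formal power series, given by their coefficient sequences. *)
Definition fps := nat -> CC.

Definition fadd (a b : fps) : fps := fun n => a n + b n.
Definition fopp (a : fps) : fps := fun n => - a n.
Definition fmul (a b : fps) : fps :=
  fun n => \sum_(i < n.+1) a i * b (n - i)%N.
Definition fone : fps := fun n => (n == 0%N)%:R.
Definition fzero : fps := fun _ => 0.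
Definition ft : fps := fun n => (n == 1%N)%:R.

Definition feq (a b : fps) : Prop := forall n, a n = b n.

Definition tdvd (a : fps) : Prop := exists q : fps, feq a (fmul ft q).

(* 2x2 matrices over Z, acting on column vectors Z^2 *)
Record mat2 := Mat2 { m11 : fps; m12 : fps; m21 : fps; m22 : fps }.

Definition mmul (A B : mat2) : mat2 :=
  Mat2 (fadd (fmul (m11 A) (m11 B)) (fmul (m12 A) (m21 B)))
       (fadd (fmul (m11 A) (m12 B)) (fmul (m12 A) (m22 B)))
       (fadd (fmul (m21 A) (m11 B)) (fmul (m22 A) (m21 B)))
       (fadd (fmul (m21 A) (m12 B)) (fmul (m22 A) (m22 B))).

Definition meq (A B : mat2) : Prop :=
  [/\ feq (m11 A) (m11 B), feq (m12 A) (m12 B),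
      feq (m21 A) (m21 B) & feq (m22 A) (m22 B)].

Definition mid : mat2 := Mat2 fone fzero fzero fone.

Definition minvertible (A : mat2) : Prop :=
  exists B : mat2, meq (mmul A B) mid /\ meq (mmul B A) mid.

(* Indices mod 10: an element j : 'I_10 represents the arrow index
   j (for j = 1..9) or 10 (for j = 0); vertices are 0..9.
   The arrow x_j goes from vertex j-1 (= ord_pred j) to vertex j,
   y_j goes from vertex j to vertex j-1.  Parity of j mod 10 = parity of j. *)

Definition xmat (b : 'I_10 -> fps) (j : 'I_10) : mat2 :=
  if odd j then Mat2 ft (b j) fzero fone
  else Mat2 fone (b j) fzero ft.

Definition ymat (b : 'I_10 -> fps) (j : 'I_10) : mat2 :=
  if odd j then Mat2 fone (fopp (b j)) fzero ft
  else Mat2 ft (fopp (b j)) fzero fone.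

Definition sum_zero (b : 'I_10 -> fps) : Prop :=
  forall n, \sum_(i < 10) b i n = 0.

(* An isomorphism M(b) -> M(c) of B_{5,10}-modules: a family of invertible
   Z-linear maps phi_i : V_i -> V_i (vertices i) commuting with all x_j, y_j. *)
Definition Miso (b c : 'I_10 -> fps) : Prop :=
  exists phi : 'I_10 -> mat2,
    (forall i, minvertible (phi i)) /\
    (forall j : 'I_10,
        meq (mmul (phi j) (xmat b j)) (mmul (xmat c j) (phi (ord_pred j))) /\
        meq (mmul (phi (ord_pred j)) (ymat b j)) (mmul (ymat c j) (phi j))).

(* B_i = b_i + b_{i+1} (indices mod 10), used for odd i *)
Definition Bsum (b : 'I_10 -> fps) (i : 'I_10) : fps := fadd (b i) (b (ordS i)).

Definition ix (k : nat) : 'I_10 := inZp k.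

(* We read the
   vertices as a chain 0, 1, ..., 10 = 0.  For a single arrow the intertwining
   equations express the matrix at one end through the matrix at the other
   end; in particular the determinant is constant along the chain, so the
   family is invertible as soon as the determinant is a nonzero constant.

   Modulo t the whole family is governed by a few constants: the lower-left
   entries at odd vertices are a common rho, and the diagonal constants
   (s, p) at consecutive even vertices are related by a "segment step"
   s' = s - rho B, p' = p + rho C with C s - B p - rho B C = 0, where B, C are
   the constant terms of B_i, C_i.  Segment steps concatenate, preserve s p,
   and satisfy C s s' = (s p) B; for a cycle of five steps a cross-ratio
   argument over four consecutive segments gives the two conditions of the
   theorem.  Conversely, under the conditions we choose rho, s_0, p_0
   explicitly so that the five segment equations hold, and then write down
   the intertwining matrices vertex by vertex. *)

From mathcomp Require Import all_boot all_order all_algebra.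
From mathcomp Require Import Rstruct complex.
From Stdlib Require Import FunctionalExtensionality Ring.
From mathcomp Require Import ring.
Set Implicit Arguments. Unset Strict Implicit. Unset Printing Implicit Defensive.
Import Order.TTheory GRing.Theory Num.Theory.
Local Open Scope ring_scope.

Lemma fps_ext (a b : fps) : feq a b -> a = b.
Proof. exact: functional_extensionality. Qed.

Lemma eq_feq (a b : fps) : a = b -> feq a b.
Proof. by move->. Qed.

Definition fsub (a b : fps) : fps := fadd a (fopp b).

(* Truncation to a polynomial: the coefficients of a product below N only
   depend on the truncations of the factors at N, which transports the ring
   laws from polynomials. *)
Definition ptrunc (N : nat) (a : fps) : {poly CC} := \poly_(i < N) a i.

Lemma fmul_ptrunc (a b : fps) (N n : nat) :
  (n < N)%N -> fmul a b n = (ptrunc N a * ptrunc N b)`_n.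
Proof.
move=> ltnN; rewrite coefM /fmul; apply: eq_bigr => i _.
have ltiN : (i < N)%N by apply: leq_ltn_trans ltnN; rewrite -ltnS.
have ltniN : (n - i < N)%N by apply: leq_ltn_trans ltnN; apply: leq_subr.
by rewrite !coef_poly ltiN ltniN.
Qed.

Lemma fmulC (a b : fps) : fmul a b = fmul b a.
Proof.
by apply: fps_ext => n; rewrite !(fmul_ptrunc _ _ (ltnSn n)) mulrC.
Qed.

Lemma fmulA (a b c : fps) : fmul a (fmul b c) = fmul (fmul a b) c.
Proof.
apply: fps_ext => n; set P := ptrunc n.+1.
have lt_sub i : (n - i < n.+1)%N by rewrite ltnS leq_subr.
have -> : fmul a (fmul b c) n = (P a * (P b * P c))`_n.
  rewrite /fmul coefM; apply: eq_bigr => i _.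
  by rewrite coef_poly ltn_ord; congr (_ * _); exact: fmul_ptrunc.
have -> : fmul (fmul a b) c n = (P a * P b * P c)`_n.
  rewrite /fmul coefM; apply: eq_bigr => i _.
  by rewrite coef_poly lt_sub; congr (_ * _); exact: fmul_ptrunc.
by rewrite mulrA.
Qed.

Lemma fmulDl (a b c : fps) : fmul (fadd a b) c = fadd (fmul a c) (fmul b c).
Proof.
apply: fps_ext => n; rewrite /fmul /fadd -big_split /=.
by apply: eq_bigr => i _; rewrite mulrDl.
Qed.

Lemma fmul1 (a : fps) : fmul fone a = a.
Proof.
apply: fps_ext => n; rewrite /fmul big_ord_recl big1 => [|i _].
  by rewrite addr0 /fone /= mul1r subn0.
by rewrite /fone /= mul0r.
Qed.

Lemma fps_ring_theory : ring_theory fzero fone fadd fmul fsub fopp (@eq fps).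
Proof.
constructor.
- by move=> a; apply: fps_ext => n; rewrite /fadd /fzero add0r.
- by move=> a b; apply: fps_ext => n; rewrite /fadd addrC.
- by move=> a b c; apply: fps_ext => n; rewrite /fadd addrA.
- exact: fmul1.
- exact: fmulC.
- exact: fmulA.
- exact: fmulDl.
- by [].
- by move=> a; apply: fps_ext => n; rewrite /fadd /fopp /fzero subrr.
Qed.

Add Ring fps_ring : fps_ring_theory.

(* Ring normalisation in C[[t]]: the Stdlib ring tactic, called explicitly
   since `ring` is the mathcomp tactic, which only knows mathcomp rings. *)
Ltac fps_ring := let G := Get_goal in ring_lookup (PackRing Ring_gen) [] G.

Definition fconst (a : CC) : fps := fun n => (n == 0%N)%:R * a.

Lemma fconstM (a b : CC) : fmul (fconst a) (fconst b) = fconst (a * b).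
Proof.
apply: fps_ext => n; rewrite /fmul big_ord_recl big1 => [|i _].
  by rewrite addr0 /fconst /= subn0 mul1r mulrCA.
by rewrite /fconst /= !mul0r.
Qed.

Lemma fconst1 : fconst 1 = fone.
Proof. by apply: fps_ext => n; rewrite /fconst mulr1. Qed.

Lemma fadd_coef0 (a b : fps) : fadd a b 0%N = a 0%N + b 0%N.
Proof. by []. Qed.
Lemma fopp_coef0 (a : fps) : fopp a 0%N = - a 0%N.
Proof. by []. Qed.
Lemma fsub_coef0 (a b : fps) : fsub a b 0%N = a 0%N - b 0%N.
Proof. by []. Qed.
Lemma fmul_coef0 (a b : fps) : fmul a b 0%N = a 0%N * b 0%N.
Proof. by rewrite /fmul big_ord1 subn0. Qed.
Lemma fconst_coef0 (a : CC) : fconst a 0%N = a.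
Proof. by rewrite /fconst mul1r. Qed.
Lemma ft_coef0 : ft 0%N = 0.
Proof. by []. Qed.

Definition coef0E :=
  (fadd_coef0, fopp_coef0, fsub_coef0, fmul_coef0, fconst_coef0, ft_coef0).

Lemma fmul_tS (a : fps) (n : nat) : fmul ft a n.+1 = a n.
Proof.
rewrite /fmul big_ord_recl big_ord_recl big1 => [|i _].
  by rewrite /ft /= !mul0r !add0r addr0 mul1r subSS subn0.
by rewrite /ft /= mul0r.
Qed.

Definition fdivt (a : fps) : fps := fun n => a n.+1.

Lemma fdivtK (a : fps) : a 0%N = 0 -> fmul ft (fdivt a) = a.
Proof.
by move=> a0; apply: fps_ext => -[|n]; rewrite ?fmul_tS // fmul_coef0 ft_coef0 mul0r.
Qed.

Lemma tdvdP (a : fps) : tdvd a <-> a 0%N = 0.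
Proof.
split => [[q ->]|a0]; first by rewrite fmul_coef0 ft_coef0 mul0r.
by exists (fdivt a); rewrite fdivtK.
Qed.

Definition Xm (par : bool) (b : fps) : mat2 :=
  if par then Mat2 ft b fzero fone else Mat2 fone b fzero ft.
Definition Ym (par : bool) (b : fps) : mat2 :=
  if par then Mat2 fone (fopp b) fzero ft else Mat2 ft (fopp b) fzero fone.

(* A' at the source and A at the target of an arrow of parity par intertwine
   its x- and y-matrices with parameters b (in M(b)) and c (in M(c)). *)
Definition intertwines (A' A : mat2) (b c : fps) (par : bool) : Prop :=
  meq (mmul A (Xm par b)) (mmul (Xm par c) A') /\
  meq (mmul A' (Ym par b)) (mmul (Ym par c) A).

Lemma intertwines_odd p q r s p' q' r' s' b c :
  intertwines (Mat2 p' q' r' s') (Mat2 p q r s) b c true <->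
  [/\ r' = fmul ft r, s' = fadd (fmul r b) s, p' = fsub p (fmul c r)
    & q = fsub (fadd (fmul ft q') (fmul c s')) (fmul b p)].
Proof.
split; last first.
  case=> -> -> -> ->; rewrite /intertwines /meq /mmul /Xm /Ym /=.
  by split; split; apply: eq_feq; fps_ring.
rewrite /intertwines /meq /mmul /Xm /Ym /=.
case=> -[_ /fps_ext x12 /fps_ext x21 /fps_ext x22] [/fps_ext y11 _ _ _].
split.
- by transitivity (fadd (fmul fzero p') (fmul fone r'));
    [fps_ring | rewrite -x21; fps_ring].
- by transitivity (fadd (fmul fzero q') (fmul fone s'));
    [fps_ring | rewrite -x22; fps_ring].
- by transitivity (fadd (fmul p' fone) (fmul q' fzero));
    [fps_ring | rewrite y11; fps_ring].
- by rewrite -x12; fps_ring.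
Qed.

Lemma intertwines_even p q r s p' q' r' s' b c :
  intertwines (Mat2 p' q' r' s') (Mat2 p q r s) b c false <->
  [/\ r = fmul ft r', s = fsub s' (fmul r' b), p = fadd p' (fmul c r')
    & q' = fsub (fadd (fmul p b) (fmul ft q)) (fmul c s')].
Proof.
split; last first.
  case=> -> -> -> ->; rewrite /intertwines /meq /mmul /Xm /Ym /=.
  by split; split; apply: eq_feq; fps_ring.
rewrite /intertwines /meq /mmul /Xm /Ym /=.
case=> -[/fps_ext x11 /fps_ext x12 /fps_ext x21 _] [_ _ _ /fps_ext y22].
split.
- by transitivity (fadd (fmul r fone) (fmul s fzero));
    [fps_ring | rewrite x21; fps_ring].
- by transitivity (fadd (fmul fzero q) (fmul fone s));
    [fps_ring | rewrite -y22; fps_ring].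
- by transitivity (fadd (fmul p fone) (fmul q fzero));
    [fps_ring | rewrite x11; fps_ring].
- by transitivity (fsub (fadd (fmul fone q') (fmul c s')) (fmul c s'));
    [fps_ring | rewrite -x12; fps_ring].
Qed.

Definition det (A : mat2) : fps :=
  fsub (fmul (m11 A) (m22 A)) (fmul (m12 A) (m21 A)).

Lemma det_intertwines A' A b c par : intertwines A' A b c par -> det A' = det A.
Proof.
case: A' A => p' q' r' s' [p q r s]; case: par.
  by case/intertwines_odd=> -> -> -> ->; rewrite /det /=; fps_ring.
by case/intertwines_even=> -> -> -> ->; rewrite /det /=; fps_ring.
Qed.

Lemma invertible_of_det A (K : CC) : det A = fconst K -> K != 0 -> minvertible A.
Proof.
case: A => p q r s; rewrite /det /= => detA K0.
have KVK : fmul (fconst K^-1) (fconst K) = fone by rewrite fconstM mulVf // fconst1.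
exists (Mat2 (fmul (fconst K^-1) s) (fopp (fmul (fconst K^-1) q))
             (fopp (fmul (fconst K^-1) r)) (fmul (fconst K^-1) p)).
rewrite /meq /mmul /mid /=.
by split; split; apply: eq_feq; rewrite -?KVK -?detA; fps_ring.
Qed.

Lemma det_coef0_neq0 A : minvertible A -> det A 0%N != 0.
Proof.
case: A => p q r s [[p2 q2 r2 s2]] [[h11 h12 h21 h22] _].
move: (h11 0%N) (h12 0%N) (h21 0%N) (h22 0%N).
rewrite /mmul /mid /det /= !coef0E => e11 e12 e21 e22.
have detM : (p 0%N * s 0%N - q 0%N * r 0%N) * (p2 0%N * s2 0%N - q2 0%N * r2 0%N) =
   (p 0%N * p2 0%N + q 0%N * r2 0%N) * (r 0%N * q2 0%N + s 0%N * s2 0%N)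
     - (p 0%N * q2 0%N + q 0%N * s2 0%N) * (r 0%N * p2 0%N + s 0%N * r2 0%N) by ring.
rewrite e11 e12 e21 e22 /fone /fzero /= mul0r subr0 mulr1 in detM.
apply/eqP => det0; move: detM; rewrite det0 mul0r.
by move=> /esym/eqP; rewrite oner_eq0.
Qed.

Lemma ix_val (k : nat) : (k < 10)%N -> val (ix k) = k.
Proof. exact: modn_small. Qed.

Lemma ordS_ix (k : nat) : ordS (ix k) = ix k.+1.
Proof. by apply: val_inj; rewrite /= -addn1 modnDml addn1. Qed.

Lemma ord_pred_ix (k : nat) : ord_pred (ix k.+1) = ix k.
Proof. by rewrite -ordS_ix ordSK. Qed.

Lemma odd_ix (k : nat) : (k < 10)%N -> odd (ix k.+1) = odd k.+1.
Proof. by move: k; do 10! case=> //. Qed.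

Lemma ord10_ix (j : 'I_10) : exists2 k, (k < 10)%N & j = ix k.+1.
Proof.
case: j => -[|m] ltm10; first by exists 9%N => //; apply: val_inj.
by exists m; [apply: ltnW | apply: val_inj; rewrite /= modn_small].
Qed.

Lemma Miso_chain (b c : 'I_10 -> fps) : Miso b c <->
  exists A : nat -> mat2,
    [/\ forall v, (v < 10)%N -> minvertible (A v), A 10%N = A 0%N &
        forall k, (k < 10)%N ->
          intertwines (A k) (A k.+1) (b (ix k.+1)) (c (ix k.+1)) (odd k.+1)].
Proof.
split.
  case=> phi [phi_inv phi_arr]; exists (fun v => phi (ix v)); split => //.
    by rewrite (_ : ix 10 = ix 0) //; apply: val_inj.
  move=> k ltk10; have [hx hy] := phi_arr (ix k.+1).
  by rewrite ord_pred_ix /xmat /ymat odd_ix // in hx hy.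
case=> A [A_inv A10 A_arr]; exists (fun j => A (val j)); split.
  by move=> j; exact: A_inv (ltn_ord j).
move=> j; have [k ltk10 ->] := ord10_ix j.
have Ak : A (val (ix k.+1)) = A k.+1.
  case: (ltnP k 9) => [lt9|ge9]; first by rewrite ix_val.
  have -> : k = 9%N by apply/eqP; rewrite eqn_leq ge9 -ltnS ltk10.
  by rewrite A10.
have [hx hy] := A_arr k ltk10.
by rewrite Ak ord_pred_ix ix_val // /xmat /ymat odd_ix.
Qed.

Section Segments.
Variable F : idomainType.

Definition seg_defect (rho B C s p : F) : F := C * s - B * p - rho * B * C.

Definition seg_step (rho B C s p s' p' : F) : Prop :=
  [/\ s' = s - rho * B, p' = p + rho * C & seg_defect rho B C s p = 0].

Lemma seg_defect_cat (rho B C B' C' s p : F) :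
  seg_defect rho (B + B') (C + C') s p =
  seg_defect rho B C s p + seg_defect rho B' C' (s - rho * B) (p + rho * C).
Proof. by rewrite /seg_defect; ring. Qed.

Lemma seg_step_cat (rho B C B' C' s p s' p' s'' p'' : F) :
  seg_step rho B C s p s' p' -> seg_step rho B' C' s' p' s'' p'' ->
  seg_step rho (B + B') (C + C') s p s'' p''.
Proof.
case=> -> -> E [-> -> E']; split; [ring | ring |].
by rewrite seg_defect_cat E E' addr0.
Qed.

Lemma seg_step_norm (rho B C s p s' p' : F) :
  seg_step rho B C s p s' p' -> s' * p' = s * p.
Proof.
case=> -> -> E; rewrite -[RHS]addr0 -(mulr0 rho) -E /seg_defect; ring.
Qed.

Lemma seg_step_rel (rho B C s p s' p' : F) :
  seg_step rho B C s p s' p' -> C * s * s' = s * p * B.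
Proof.
case=> -> _ E; apply/eqP; rewrite -subr_eq0; apply/eqP.
by rewrite -(mulr0 s) -E /seg_defect; ring.
Qed.

(* Cross-ratio identity for four consecutive segments closing up a cycle
   through the points s0, s1, s2, s3. *)
Lemma four_segments (K s0 s1 s2 s3 Ba Bb Bc Bd Ca Cb Cc Cd : F) :
  s0 * s1 * s2 * s3 != 0 ->
  Ca * s0 * s1 = K * Ba -> Cb * s1 * s2 = K * Bb ->
  Cc * s2 * s3 = K * Bc -> Cd * s3 * s0 = K * Bd ->
  Ca * Bb * Cc * Bd - Ba * Cb * Bc * Cd = 0.
Proof.
move=> s0123 ha hb hc hd; apply: (mulIf s0123); rewrite mul0r.
transitivity ((Ca * s0 * s1) * Bb * (Cc * s2 * s3) * Bd
              - Ba * (Cb * s1 * s2) * Bc * (Cd * s3 * s0)); first ring.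
by rewrite ha hb hc hd; ring.
Qed.

Lemma cycle_conditions (rho s0 s1 s2 s3 s4 p0 p1 p2 p3 p4
                        B1 B2 B3 B4 B5 C1 C2 C3 C4 C5 : F) :
  s0 * p0 != 0 ->
  seg_step rho B1 C1 s0 p0 s1 p1 -> seg_step rho B2 C2 s1 p1 s2 p2 ->
  seg_step rho B3 C3 s2 p2 s3 p3 -> seg_step rho B4 C4 s3 p3 s4 p4 ->
  seg_step rho B5 C5 s4 p4 s0 p0 ->
  C1 * B2 * (C3 + C4) * B5 - B1 * C2 * (B3 + B4) * C5 = 0 /\
  C1 * B2 * C3 * (B4 + B5) - B1 * C2 * B3 * (C4 + C5) = 0.
Proof.
move=> K0 h1 h2 h3 h4 h5; set K := s0 * p0 in K0.
have K1 : s1 * p1 = K by rewrite (seg_step_norm h1).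
have K2 : s2 * p2 = K by rewrite (seg_step_norm h2) K1.
have K3 : s3 * p3 = K by rewrite (seg_step_norm h3) K2.
have K4 : s4 * p4 = K by rewrite (seg_step_norm h4) K3.
have nz s p : s * p = K -> s != 0.
  by move=> sp; apply: contraNneq K0 => s_0; rewrite -sp s_0 mul0r.
have s0n : s0 != 0 by apply: (nz _ p0).
have s1n := nz _ _ K1; have s2n := nz _ _ K2.
have s3n := nz _ _ K3; have s4n := nz _ _ K4.
have r1 : C1 * s0 * s1 = K * B1 by rewrite (seg_step_rel h1).
have r2 : C2 * s1 * s2 = K * B2 by rewrite (seg_step_rel h2) K1.
have r3 : C3 * s2 * s3 = K * B3 by rewrite (seg_step_rel h3) K2.
have r5 : C5 * s4 * s0 = K * B5 by rewrite (seg_step_rel h5) K4.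
have r34 : (C3 + C4) * s2 * s4 = K * (B3 + B4).
  by rewrite (seg_step_rel (seg_step_cat h3 h4)) K2.
have r45 : (C4 + C5) * s3 * s0 = K * (B4 + B5).
  by rewrite (seg_step_rel (seg_step_cat h4 h5)) K3.
split; [apply: (four_segments _ r1 r2 r34 r5) | apply: (four_segments _ r1 r2 r3 r45)];
  by rewrite !mulf_neq0.
Qed.

(* Under the nondegeneracy assumptions, the two conditions allow choosing
   rho, s0, p0 so that the five increments form a closed cycle of segment
   steps (the fifth equation being implied by the other four). *)
Lemma cycle_exists (B1 B2 B3 B4 B5 C1 C2 C3 C4 C5 : F) :
  B5 = - (B1 + B2 + B3 + B4) -> C5 = - (C1 + C2 + C3 + C4) ->
  B1 != 0 -> B2 != 0 -> B5 != 0 -> C1 != 0 -> C5 != 0 ->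
  B1 + B2 != 0 -> B5 + B1 != 0 -> C5 + C1 != 0 ->
  C1 * B2 * (C3 + C4) * B5 - B1 * C2 * (B3 + B4) * C5 = 0 ->
  C1 * B2 * C3 * (B4 + B5) - B1 * C2 * B3 * (C4 + C5) = 0 ->
  exists rho s0 p0 : F, s0 * p0 != 0 /\
  let s1 := s0 - rho * B1 in let s2 := s1 - rho * B2 in
  let s3 := s2 - rho * B3 in let s4 := s3 - rho * B4 in
  let p1 := p0 + rho * C1 in let p2 := p1 + rho * C2 in
  let p3 := p2 + rho * C3 in let p4 := p3 + rho * C4 in
  [/\ seg_defect rho B1 C1 s0 p0 = 0, seg_defect rho B2 C2 s1 p1 = 0,
      seg_defect rho B3 C3 s2 p2 = 0 & seg_defect rho B4 C4 s3 p3 = 0].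
Proof.
move=> B5E C5E B1n B2n B5n C1n C5n B12n B51n C51n cond1 cond2.
exists (B1 * C5 - C1 * B5), (- (B1 * B5 * (C1 + C5))), (- (C1 * C5 * (B1 + B5))).
have C15n : C1 + C5 != 0 by rewrite addrC.
have B15n : B1 + B5 != 0 by rewrite addrC.
split; first by rewrite mulrNN !mulf_neq0.
set rho := B1 * C5 - C1 * B5; set s0 := - (B1 * B5 * (C1 + C5)).
set p0 := - (C1 * C5 * (B1 + B5)).
move=> s1 s2 s3 s4 p1 p2 p3 p4.
set E1 := seg_defect rho B1 C1 s0 p0; set E2 := seg_defect rho B2 C2 s1 p1.
set E3 := seg_defect rho B3 C3 s2 p2; set E4 := seg_defect rho B4 C4 s3 p3.
set E5 := seg_defect rho B5 C5 s4 p4.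
have E1_0 : E1 = 0 by rewrite /E1 /seg_defect /s0 /p0 /rho; ring.
have E5_0 : E5 = 0.
  rewrite /E5 /seg_defect /s4 /s3 /s2 /s1 /p4 /p3 /p2 /p1 /s0 /p0 /rho.
  by rewrite B5E C5E; ring.
(* The first condition is, up to sign, the second segment equation. *)
have E2_0 : E2 = 0.
  rewrite -[E2]opprK -[RHS]oppr0 -cond1; congr (- _).
  by rewrite /E2 /seg_defect /s1 /p1 /s0 /p0 /rho B5E C5E; ring.
have sumE : E1 + E2 + E3 + E4 + E5 = 0.
  rewrite /E1 /E2 /E3 /E4 /E5 /seg_defect /s4 /s3 /s2 /s1 /p4 /p3 /p2 /p1.
  by rewrite B5E C5E; ring.
(* The second condition expresses a nonzero multiple of E3 through E1, E2. *)
have cond2E : (C1 * B2 * C3 * (B4 + B5) - B1 * C2 * B3 * (C4 + C5)) * (s0 * s1 * s2)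
     + s0 * p0 * B1 * B2 * (B1 + B2) * E3
   = s0 * p0 * B1 * B2 * B3 * (E1 + E2) + s0 * s2 * B2 * C3 * (B4 + B5) * E1
     - B1 * B3 * s0 * (C4 + C5) * (rho * B2 * E1 + s1 * E2).
  by rewrite /E1 /E2 /E3 /seg_defect /s2 /s1 /p2 /p1 B5E C5E; ring.
have E3_0 : E3 = 0.
  have nz : s0 * p0 * B1 * B2 * (B1 + B2) != 0 by rewrite mulrNN !mulf_neq0.
  move: cond2E; rewrite cond2 E1_0 E2_0 !(mul0r, mulr0, addr0, add0r, oppr0).
  by move/eqP; rewrite mulf_eq0 (negbTE nz) => /eqP.
have E4_0 : E4 = 0 by move: sumE; rewrite E1_0 E2_0 E3_0 E5_0 !add0r addr0.
by split.
Qed.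

End Segments.

Lemma pair_constants A0 A1 A2 b1 c1 b2 c2 :
  intertwines A0 A1 b1 c1 true -> intertwines A1 A2 b2 c2 false ->
  let rho := m21 A1 0%N in
  [/\ m21 A0 0%N = 0, m21 A0 1%N = rho, m21 A2 1%N = rho &
      seg_step rho (b1 0%N + b2 0%N) (c1 0%N + c2 0%N)
        (m22 A0 0%N) (m11 A0 0%N) (m22 A2 0%N) (m11 A2 0%N)].
Proof.
case: A0 A1 A2 => p0 q0 r0 s0 [p1 q1 r1 s1] [p2 q2 r2 s2] /=.
case/intertwines_odd => -> -> -> ->.
case/intertwines_even => -> -> -> /(congr1 (fun f : fps => f 0%N)).
rewrite !coef0E !mul0r !add0r => /eqP; rewrite -subr_eq0 => /eqP E.
split; rewrite ?fmul_tS //; split; [ring | ring |].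
by rewrite /seg_defect -E; ring.
Qed.

Lemma BsumE (f : 'I_10 -> fps) (k : nat) :
  Bsum f (ix k) 0%N = f (ix k) 0%N + f (ix k.+1) 0%N.
Proof. by rewrite /Bsum ordS_ix. Qed.

Lemma iso_conditions (b c : 'I_10 -> fps) : Miso b c ->
  let B k := Bsum b (ix k) 0%N in let C k := Bsum c (ix k) 0%N in
  C 1 * B 3 * (C 5 + C 7) * B 9 - B 1 * C 3 * (B 5 + B 7) * C 9 = 0 /\
  C 1 * B 3 * C 5 * (B 7 + B 9) - B 1 * C 3 * B 5 * (C 7 + C 9) = 0.
Proof.
case/Miso_chain=> A [A_inv A10 A_arr] B C.
have [r0 _ r2 h1] := pair_constants (A_arr 0%N isT) (A_arr 1%N isT).
have [_ r2' r4 h2] := pair_constants (A_arr 2%N isT) (A_arr 3%N isT).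
have [_ r4' r6 h3] := pair_constants (A_arr 4%N isT) (A_arr 5%N isT).
have [_ r6' r8 h4] := pair_constants (A_arr 6%N isT) (A_arr 7%N isT).
have [_ r8' _ h5] := pair_constants (A_arr 8%N isT) (A_arr 9%N isT).
(* The linear coefficients at the even vertices identify all the rho's. *)
have rho3 : m21 (A 3%N) 0%N = m21 (A 1%N) 0%N by rewrite -r2' r2.
have rho5 : m21 (A 5%N) 0%N = m21 (A 1%N) 0%N by rewrite -r4' r4 rho3.
have rho7 : m21 (A 7%N) 0%N = m21 (A 1%N) 0%N by rewrite -r6' r6 rho5.
have rho9 : m21 (A 9%N) 0%N = m21 (A 1%N) 0%N by rewrite -r8' r8 rho7.
rewrite rho3 in h2; rewrite rho5 in h3; rewrite rho7 in h4; rewrite rho9 A10 in h5.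
rewrite /B /C !BsumE.
apply: (cycle_conditions _ h1 h2 h3 h4 h5).
have := det_coef0_neq0 (A_inv 0%N isT).
by rewrite /det !coef0E r0 mulr0 subr0 mulrC.
Qed.

Fixpoint fsum (f : nat -> fps) (m : nat) : fps :=
  if m is m'.+1 then fadd (fsum f m') (f m) else fzero.

Lemma fsum_ix10 (f : 'I_10 -> fps) : sum_zero f -> fsum (fun k => f (ix k)) 10 = fzero.
Proof.
move=> f0; apply: fps_ext => n; rewrite /fzero -(f0 n).
rewrite (_ : \sum_(i < 10) f i n = \sum_(i < 10) f (ix i) n); last first.
  by apply: eq_bigr => i _; congr (f _ n); apply: val_inj; rewrite /= modn_small.
rewrite -(big_mkord xpredT (fun i => f (ix i) n)) !big_nat_recr // big_geq //=.
rewrite (_ : ix 10 = ix 0); last exact: val_inj.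
by rewrite /fadd /fzero; ring.
Qed.

Section Construction.
Variables (b c : 'I_10 -> fps) (rho s0 p0 : CC).

(* The explicit intertwining matrices: the diagonal entries move by rho times
   the partial sums of the parameters, the lower-left entry is rho (times t
   at even vertices), and the upper-right entry is the accumulated defect
   (divided by t at even vertices). *)
Definition sv (v : nat) : fps :=
  fsub (fconst s0) (fmul (fconst rho) (fsum (fun k => b (ix k)) v)).
Definition pv (v : nat) : fps :=
  fadd (fconst p0) (fmul (fconst rho) (fsum (fun k => c (ix k)) v)).
Definition rv (v : nat) : fps := if odd v then fconst rho else fmul ft (fconst rho).
Definition defect_at (k : nat) : fps :=
  fsub (fmul (c (ix k)) (sv k.-1)) (fmul (b (ix k)) (pv k)).
Definition Dv (v : nat) : fps := fsum defect_at v.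
Definition qv (v : nat) : fps := if odd v then Dv v else fdivt (Dv v).
Definition Phi (v : nat) : mat2 := Mat2 (pv v) (qv v) (rv v) (sv v).

(* The odd arrow k.+1 is intertwined once the defect up to the even vertex k
   vanishes modulo t (it is then divisible by t in the entry qv k). *)
Lemma Phi_intertwines_odd (k : nat) : ~~ odd k -> Dv k 0%N = 0 ->
  intertwines (Phi k) (Phi k.+1) (b (ix k.+1)) (c (ix k.+1)) true.
Proof.
move=> /negbTE k_even Dk0; apply/intertwines_odd.
rewrite /qv /rv /= k_even; split => //.
- by rewrite /sv /=; fps_ring.
- by rewrite /pv /=; fps_ring.
- by rewrite fdivtK // /Dv /= /defect_at /=; fps_ring.
Qed.

Lemma Phi_intertwines_even (k : nat) : odd k -> Dv k.+1 0%N = 0 ->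
  intertwines (Phi k) (Phi k.+1) (b (ix k.+1)) (c (ix k.+1)) false.
Proof.
move=> k_odd Dk0; apply/intertwines_even.
rewrite /qv /rv /= k_odd; split => //.
- by rewrite /sv /=; fps_ring.
- by rewrite /pv /=; fps_ring.
- by rewrite fdivtK // /Dv /= /defect_at /=; fps_ring.
Qed.

Lemma sv0 : sv 0 0%N = s0.
Proof. by rewrite /sv /= !coef0E /fzero mulr0 subr0. Qed.

Lemma pv0 : pv 0 0%N = p0.
Proof. by rewrite /pv /= !coef0E /fzero mulr0 addr0. Qed.

Lemma sv_step (k : nat) : sv k.+2 0%N = sv k 0%N - rho * Bsum b (ix k.+1) 0%N.
Proof. by rewrite /sv /= BsumE !coef0E; ring. Qed.

Lemma pv_step (k : nat) : pv k.+2 0%N = pv k 0%N + rho * Bsum c (ix k.+1) 0%N.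
Proof. by rewrite /pv /= BsumE !coef0E; ring. Qed.

Lemma Dv_step (k : nat) : Dv k.+2 0%N = Dv k 0%N +
  seg_defect rho (Bsum b (ix k.+1) 0%N) (Bsum c (ix k.+1) 0%N) (sv k 0%N) (pv k 0%N).
Proof.
by rewrite /Dv /= /defect_at /sv /pv /seg_defect /= !BsumE !coef0E; ring.
Qed.

Hypotheses (b0 : sum_zero b) (c0 : sum_zero c).

Lemma Dv10 : Dv 10 = fzero.
Proof.
have -> : Dv 10 = fsub (fmul (fconst s0) (fsum (fun k => c (ix k)) 10))
    (fadd (fmul (fconst p0) (fsum (fun k => b (ix k)) 10))
          (fmul (fconst rho) (fmul (fsum (fun k => b (ix k)) 10)
                                   (fsum (fun k => c (ix k)) 10)))).
  by rewrite /Dv /defect_at /sv /pv /=; fps_ring.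
by rewrite (fsum_ix10 b0) (fsum_ix10 c0); fps_ring.
Qed.

Lemma iso_of_defects : s0 * p0 != 0 ->
  (forall k, (k < 10)%N -> ~~ odd k -> Dv k 0%N = 0) -> Miso b c.
Proof.
move=> K0 D_even; apply/Miso_chain; exists Phi.
have Phi_arr k : (k < 10)%N ->
    intertwines (Phi k) (Phi k.+1) (b (ix k.+1)) (c (ix k.+1)) (odd k.+1).
  move=> ltk10 /=; case: (boolP (odd k)) => [k_odd|k_even] /=.
    apply: Phi_intertwines_even => //.
    have [lt10|ge10] := ltnP k.+1 10; first by apply: D_even; rewrite //= negbK.
    have -> : k.+1 = 10%N by apply/eqP; rewrite eqn_leq ge10 ltk10.
    by rewrite Dv10.
  exact: Phi_intertwines_odd (D_even k ltk10 k_even).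
have det_Phi v : (v <= 10)%N -> det (Phi v) = fconst (p0 * s0).
  elim: v => [_|v IHv ltv]; last by rewrite -(det_intertwines (Phi_arr v ltv)) IHv // ltnW.
  rewrite -fconstM /det /Phi /= /qv /= (_ : fdivt (Dv 0) = fzero) //.
  by rewrite /pv /sv /rv /=; fps_ring.
split => //.
- move=> v ltv; apply: (invertible_of_det (det_Phi v (ltnW ltv))).
  by rewrite mulrC.
- by rewrite /Phi /pv /sv /qv (fsum_ix10 b0) (fsum_ix10 c0) Dv10.
Qed.

End Construction.

Lemma ntdvd_coef0 (a : fps) : ~ tdvd a -> a 0%N != 0.
Proof. by move=> ndvd; apply/eqP => a0; apply: ndvd; apply/tdvdP. Qed.

Lemma Bsum_cycle (b : 'I_10 -> fps) : sum_zero b ->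
  Bsum b (ix 9) 0%N = - (Bsum b (ix 1) 0%N + Bsum b (ix 3) 0%N
                         + Bsum b (ix 5) 0%N + Bsum b (ix 7) 0%N).
Proof.
move=> /fsum_ix10 /(congr1 (fun f : fps => f 0%N)) /=.
rewrite !coef0E !BsumE /fzero => sum0.
by apply/eqP; rewrite -subr_eq0 opprK -[X in _ == X]sum0; apply/eqP; ring.
Qed.

Lemma conditions_iso (b c : 'I_10 -> fps) : sum_zero b -> sum_zero c ->
  (forall i : 'I_10, odd i ->
     [/\ ~ tdvd (Bsum b i), ~ tdvd (Bsum c i),
         ~ tdvd (fadd (Bsum b i) (Bsum b (ordS (ordS i))))
       & ~ tdvd (fadd (Bsum c i) (Bsum c (ordS (ordS i))))]) ->
  let B k := Bsum b (ix k) 0%N in let C k := Bsum c (ix k) 0%N in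
  C 1 * B 3 * (C 5 + C 7) * B 9 - B 1 * C 3 * (B 5 + B 7) * C 9 = 0 ->
  C 1 * B 3 * C 5 * (B 7 + B 9) - B 1 * C 3 * B 5 * (C 7 + C 9) = 0 ->
  Miso b c.
Proof.
move=> b0 c0 nondeg B C cond1 cond2.
have [/ntdvd_coef0 B1n /ntdvd_coef0 C1n /ntdvd_coef0 B13n /ntdvd_coef0 C13n] :=
  nondeg (ix 1) isT.
have [/ntdvd_coef0 B3n _ _ _] := nondeg (ix 3) isT.
have [/ntdvd_coef0 B9n /ntdvd_coef0 C9n /ntdvd_coef0 B91n /ntdvd_coef0 C91n] :=
  nondeg (ix 9) isT.
rewrite !ordS_ix /= !fadd_coef0 in B13n C13n B91n C91n.
rewrite (_ : ix 11 = ix 1) in B91n C91n; last exact: val_inj.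
have [rho [s0 [p0 [K0 [E1 E2 E3 E4]]]]] := cycle_exists (Bsum_cycle b0) (Bsum_cycle c0)
  B1n B3n B9n C1n C9n B13n B91n C91n cond1 cond2.
apply: (iso_of_defects (rho := rho) b0 c0 K0) => k ltk10 k_even.
(* The accumulated defects are the partial sums of the segment defects. *)
have Dv2 : Dv b c rho s0 p0 2 0%N = 0 by rewrite Dv_step sv0 pv0 E1 addr0.
have Dv4 : Dv b c rho s0 p0 4 0%N = 0.
  by rewrite Dv_step Dv2 sv_step pv_step sv0 pv0 E2 addr0.
have Dv6 : Dv b c rho s0 p0 6 0%N = 0.
  by rewrite Dv_step Dv4 !sv_step !pv_step sv0 pv0 E3 addr0.
have Dv8 : Dv b c rho s0 p0 8 0%N = 0.
  by rewrite Dv_step Dv6 !sv_step !pv_step sv0 pv0 E4 addr0.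
by move: k ltk10 k_even; do 10! case=> //.
Qed.

Theorem theorem2p10 (b c : 'I_10 -> fps) :
  sum_zero b -> sum_zero c ->
  (forall i : 'I_10, odd i ->
     [/\ ~ tdvd (Bsum b i), ~ tdvd (Bsum c i),
         ~ tdvd (fadd (Bsum b i) (Bsum b (ordS (ordS i))))
       & ~ tdvd (fadd (Bsum c i) (Bsum c (ordS (ordS i))))]) ->
  (Miso b c <->
   (tdvd (fadd
      (fmul (fmul (fmul (Bsum c (ix 1)) (Bsum b (ix 3)))
                  (fadd (Bsum c (ix 5)) (Bsum c (ix 7)))) (Bsum b (ix 9)))
      (fopp (fmul (fmul (fmul (Bsum b (ix 1)) (Bsum c (ix 3)))
                  (fadd (Bsum b (ix 5)) (Bsum b (ix 7)))) (Bsum c (ix 9)))))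
    /\
    tdvd (fadd
      (fmul (fmul (fmul (Bsum c (ix 1)) (Bsum b (ix 3))) (Bsum c (ix 5)))
            (fadd (Bsum b (ix 7)) (Bsum b (ix 9))))
      (fopp (fmul (fmul (fmul (Bsum b (ix 1)) (Bsum c (ix 3))) (Bsum b (ix 5)))
            (fadd (Bsum c (ix 7)) (Bsum c (ix 9)))))))).
Proof.
move=> b0 c0 nondeg; rewrite !tdvdP !coef0E.
split; first exact: iso_conditions.
by case; apply: conditions_iso.
Qed.
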